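(* Let $K$ satisfy $m:=\binom K2\ge8$, and let $\Omega=\{0,1\}^{\binom{[K]}{2}}$ (vectors indexed by 2-element subsets of $[K]$) with Hamming distance $d_H$. For a permutation $\sigma$ of $[K]$ and $\omega\in\Omega$ define $T_\sigma(\omega)\in\Omega$ by $T_\sigma(\omega)_{\{k,k'\}}=\omega_{\{\sigma(k),\sigma(k')\}}$. Then there exists $\Omega''\subseteq\Omega$ such that $\mathbf 0\in\Omega''$, for all distinct $\omega_1,\omega_2\in\Omega''$ $$\min_{\sigma}d_H(T_\sigma(\omega_1),\omega_2)\ge\frac{1}{17}\binom K2,$$ the minimum being over all permutations of $[K]$, and $|\Omega''|\ge1+2^{\frac18\binom K2}/K!$.
   Context: $d_H(\omega,\omega')$ is the number of coordinates in which $\omega$ and $\omega'$ differ. (For the matrix $\mathtt B(\omega)$ with $\mathtt B_{kk}=1/2$, $\mathtt B_{kk'}=1/4+\omega_{\{k,k'\}}\mu/n$, the map $T_\sigma$ corresponds to conjugation $\mathtt B(\omega)\mapsto\Pi\mathtt B(\omega)\Pi^{\mathrm T}$ by a permutation matrix.) *)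

From HB Require Import structures.
From mathcomp Require Import all_boot all_order all_algebra all_fingroup.
Set Implicit Arguments. Unset Strict Implicit. Unset Printing Implicit Defensive.

Definition pair2 (K : nat) := {A : {set 'I_K} | #|A| == 2}.
HB.instance Definition _ K := [Finite of pair2 K by <:].

Definition Omega (K : nat) := {ffun pair2 K -> bool}.

Lemma card_imset_perm2 K (s : {perm 'I_K}) (p : pair2 K) :
  #|s @: val p| == 2.
Proof. by rewrite card_imset; [exact: (valP p) | exact: perm_inj]. Qed.

Definition pair_img K (s : {perm 'I_K}) (p : pair2 K) : pair2 K :=
  exist _ (s @: val p) (card_imset_perm2 s p).

Definition Tperm K (s : {perm 'I_K}) (w : Omega K) : Omega K :=
  [ffun p => w (pair_img s p)].

Definition dH K (w w' : Omega K) : nat := #|[set p | w p != w' p]|.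

Definition zeroOmega K : Omega K := [ffun _ => false].

From HB Require Import structures.
From mathcomp Require Import all_boot all_order all_algebra all_fingroup.
From mathcomp Require Import all_classical all_reals all_analysis.
From mathcomp Require Import zify ring lra.
Import Order.TTheory GRing.Theory Num.Theory.
Set Implicit Arguments. Unset Strict Implicit. Unset Printing Implicit Defensive.

(* A greedy (Gilbert-Varshamov) argument.  Take a largest set containing 0
   whose points stay at distance at least m/17 from every relabelling of every
   other point.  By maximality, every point of {0,1}^m lies within distance
   m/17 of T_s(w), or is mapped by some T_s within distance m/17 of w, for some
   w in the set; hence 2^m is at most about 2 K! |set| times the size of a
   Hamming ball of radius m/17.  The weight 4^(m - d(x,w)) sums to 5^m over all
   x, so such a ball has at most 5^m / 4^(m - m/17) points, and
   2^m 4^(m - m/17) / 5^m is much larger than 2^(m/8). *)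

Lemma card_pair2 K : #|{: pair2 K}| = 'C(K, 2).
Proof.
have := card_draws 'I_K 2; rewrite card_ord => <-.
rewrite -(card_imset _ val_inj); apply: eq_card => A.
rewrite inE; apply/imsetP/idP => [[p _ ->]|A2]; first exact: (valP p).
by exists (exist _ A A2).
Qed.

Lemma card_bigcup_le (I T : finType) (P : pred I) (F : I -> {set T}) :
  #|\bigcup_(i | P i) F i| <= \sum_(i | P i) #|F i|.
Proof.
apply: (big_ind2 (fun (U : {set T}) n => #|U| <= n)) => [|U1 n1 U2 n2 h1 h2|//].
  by rewrite cards0.
exact: leq_trans (leq_card_setU U1 U2) (leq_add h1 h2).
Qed.

Section SeparatedSets.

Variable K : nat.
Local Notation m := #|{: pair2 K}|.
Local Notation radius := (m.-1 %/ 17).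

Lemma dH_sym (a b : Omega K) : dH a b = dH b a.
Proof. by apply: eq_card => p; rewrite !inE eq_sym. Qed.

Lemma pair_img_inj (s : {perm 'I_K}) : injective (pair_img s).
Proof. by move=> p q /(congr1 val) /imset_inj h; apply/val_inj/h/perm_inj. Qed.

Lemma Tperm_inj (s : {perm 'I_K}) : injective (Tperm s).
Proof.
move=> a b eq_ab; apply/ffunP => q.
have [g _ gK] := injF_bij (@pair_img_inj s).
by have := congr1 (fun f : Omega K => f (g q)) eq_ab; rewrite !ffunE gK.
Qed.

Lemma card_dH_ball (w : Omega K) (r : nat) :
  4 ^ (m - r) * #|[set x : Omega K | dH x w <= r]| <= 5 ^ m.
Proof.
have weightE x : 4 ^ (m - dH x w) = \prod_p (if x p == w p then 4 else 1).
  rewrite -big_mkcond prod_nat_const /=; congr (4 ^ _).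
  have -> : dH x w = #|~: [set p | x p == w p]|.
    by apply: eq_card => p; rewrite !inE.
  by rewrite -(cardsC [set p | x p == w p]) addnK; apply: eq_card => p; rewrite inE.
have weight_sum : \sum_(x : Omega K) 4 ^ (m - dH x w) = 5 ^ m.
  rewrite (eq_bigr _ (fun x _ => weightE x)).
  rewrite -(bigA_distr_bigA (fun p (b : bool) => if b == w p then 4 else 1)).
  rewrite (eq_bigr (fun _ => 5)) ?prod_nat_const // => p _.
  by rewrite big_bool /=; case: (w p).
rewrite -weight_sum -sum1_card big_distrr /=.
rewrite [leqRHS](bigID [in [set x | dH x w <= r]]) /=.
apply: leq_trans (leq_addr _ _); apply: leq_sum => x; rewrite inE => dxw.
by rewrite muln1 leq_pexp2l // leq_sub2l.
Qed.

Lemma dist_lt_radius d : 17 * d < m -> d <= radius.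
Proof. lia. Qed.

Definition near_set (S : {set Omega K}) : {set Omega K} :=
  \bigcup_(w in S) \bigcup_(s : {perm 'I_K})
    ([set x | 17 * dH (Tperm s w) x < m] :|: [set x | 17 * dH (Tperm s x) w < m]).

Lemma card_near_pair (w : Omega K) (s : {perm 'I_K}) :
  4 ^ (m - radius) * #|[set x | 17 * dH (Tperm s w) x < m] :|:
                       [set x | 17 * dH (Tperm s x) w < m]| <= 2 * 5 ^ m.
Proof.
apply: leq_trans (leq_mul (leqnn _) (leq_card_setU _ _)) _.
rewrite mulnDr mul2n -addnn; apply: leq_add.
  apply: leq_trans (card_dH_ball (Tperm s w) radius); rewrite leq_mul2l.
  apply/orP; right; apply/subset_leq_card/fintype.subsetP => x.
  by rewrite !inE dH_sym => /dist_lt_radius.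
apply: leq_trans (card_dH_ball w radius); rewrite leq_mul2l; apply/orP; right.
rewrite -(card_preimset [set x | dH x w <= radius] (@Tperm_inj s)).
apply/subset_leq_card/fintype.subsetP => x.
by rewrite !inE => /dist_lt_radius.
Qed.

Lemma card_near_set (S : {set Omega K}) :
  4 ^ (m - radius) * #|near_set S| <= #|S| * (K`! * (2 * 5 ^ m)).
Proof.
apply: leq_trans (leq_mul (leqnn _) (card_bigcup_le _ _)) _.
rewrite big_distrr -sum_nat_const; apply: leq_sum => w _.
apply: leq_trans (leq_mul (leqnn _) (card_bigcup_le _ _)) _.
rewrite big_distrr -card_Sn -sum_nat_const.
exact: leq_sum (fun s _ => card_near_pair w s).
Qed.

Definition separated (S : {set Omega K}) : bool :=
  [forall w1 in S, forall w2 in S, forall s : {perm 'I_K},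
    (w1 != w2) ==> (m <= 17 * dH (Tperm s w1) w2)].

Lemma separatedP (S : {set Omega K}) :
  reflect (forall w1 w2 s, w1 \in S -> w2 \in S -> w1 != w2 ->
             m <= 17 * dH (Tperm s w1) w2)
          (separated S).
Proof.
apply: (iffP forall_inP) => [sepS w1 w2 s S1 S2 ne12 | sepS w1 S1].
  by move/forall_inP: (sepS w1 S1) => /(_ w2 S2) /forallP /(_ s) /implyP; apply.
by apply/forall_inP => w2 S2; apply/forallP => s; apply/implyP; apply: sepS.
Qed.

Lemma separated_setU1 (S : {set Omega K}) (x : Omega K) :
  separated S -> x \notin near_set S -> separated (x |: S).
Proof.
move=> /separatedP sepS x_far; apply/separatedP => w1 w2 s.
have far w t : w \in S -> (m <= 17 * dH (Tperm t w) x) && (m <= 17 * dH (Tperm t x) w).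
  move=> Sw; apply: contraNT x_far; rewrite negb_and -!ltnNge => close.
  by apply/bigcupP; exists w => //; apply/bigcupP; exists t; rewrite // !inE.
rewrite !inE => /predU1P[-> | S1] /predU1P[-> | S2] ne12.
- by rewrite eqxx in ne12.
- by case/andP: (far w2 s S2).
- by case/andP: (far w1 s S1).
- exact: sepS.
Qed.

Definition oneOmega : Omega K := [ffun _ => true].

Lemma separated_zero_one : 0 < m -> separated [set zeroOmega K; oneOmega].
Proof.
have T0 s : Tperm s (zeroOmega K) = zeroOmega K by apply/ffunP => p; rewrite !ffunE.
have T1 s : Tperm s oneOmega = oneOmega by apply/ffunP => p; rewrite !ffunE.
have d01 : dH (zeroOmega K) oneOmega = m by apply: eq_card => p; rewrite !inE !ffunE.
move=> m_gt0; apply/separatedP => w1 w2 s.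
rewrite !inE => /orP[]/eqP-> /orP[]/eqP-> ne12; rewrite ?eqxx // in ne12;
  rewrite ?T0 ?T1 ?d01 1?dH_sym ?d01; lia.
Qed.

Lemma zero_neq_one : 0 < m -> zeroOmega K != oneOmega.
Proof. by case/card_gt0P => p _; apply/eqP => /ffunP /(_ p); rewrite !ffunE. Qed.

Lemma exists_large_separated : 0 < m ->
  exists S : {set Omega K},
    [/\ separated S, zeroOmega K \in S, 2 <= #|S| &
        4 ^ (m - radius) * 2 ^ m <= 3 * (#|S| * (K`! * 5 ^ m))].
Proof.
move=> m_gt0; pose admissible (S : {set Omega K}) := (zeroOmega K \in S) && separated S.
have adm01 : admissible [set zeroOmega K; oneOmega].
  by rewrite /admissible !inE eqxx separated_zero_one.
have [S /andP[S0 sepS] maxS] := arg_maxnP (fun S : {set Omega K} => #|S|) adm01.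
have S_ge2 : 2 <= #|S| by have := maxS _ adm01; rewrite cards2 zero_neq_one.
have covered : 2 ^ m <= #|S| + #|near_set S|.
  rewrite -card_bool -card_ffun -cardsT; apply: leq_trans (leq_card_setU _ _).
  apply/subset_leq_card/fintype.subsetP => x _; rewrite inE.
  apply/negPn/negP; rewrite negb_or => /andP[xS x_far].
  have adm_x : admissible (x |: S) by rewrite /admissible in_setU1 S0 orbT separated_setU1.
  by have := maxS _ adm_x; rewrite cardsU1 xS; lia.
have own_le : 4 ^ (m - radius) * #|S| <= #|S| * (K`! * 5 ^ m).
  rewrite mulnC leq_mul2l; apply/orP; right.
  apply: leq_trans (leq_pexp2l _ (leq_subr _ _)) _ => //.
  by rewrite -[X in X <= _]mul1n leq_mul ?fact_gt0 ?leq_exp2r.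
exists S; split => //.
apply: leq_trans (leq_mul (leqnn _) covered) _.
rewrite mulnDr; apply: leq_trans (leq_add own_le (card_near_set S)) _.
set c := #|S| * (K`! * 5 ^ m).
by have -> : #|S| * (K`! * (2 * 5 ^ m)) = 2 * c by rewrite /c; nia.
Qed.

End SeparatedSets.

Lemma expn24_eighth_le (m : nat) : 8 <= m ->
  6 ^ 24 * 5 ^ (m * 24) * 2 ^ (m * 3) <= (2 ^ m * 4 ^ (m - m.-1 %/ 17)) ^ 24.
Proof.
move=> m_ge8.
have le5 : 5 ^ (m * 24) <= 2 ^ (7 * (8 * m)).
  rewrite (_ : m * 24 = 3 * (8 * m)); last by lia.
  by rewrite (expnM 5 3) (expnM 2 7) leq_exp2r //; lia.
have le6 : 6 ^ 24 <= 2 ^ (3 * 24) by rewrite expnM leq_exp2r.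
(* cleared so that lia does not evaluate 6 ^ 24 in unary *)
apply: leq_trans (leq_mul (leq_mul le6 le5) (leqnn _)) _; clear le5 le6.
rewrite -!expnD expnMn -!expnM (_ : 4 = 2 ^ 2) // -expnM -expnD.
by rewrite leq_pexp2l //; lia.
Qed.

Local Open Scope ring_scope.

Lemma powR_eighth_le (R : realType) (m : nat) : (8 <= m)%N ->
  6 * 5 ^+ m * 2 `^ (m%:R / 8) <= (2 ^ m * 4 ^ (m - m.-1 %/ 17))%:R :> R.
Proof.
move=> m_ge8; set A : R := 2 `^ (m%:R / 8).
have A8 : A ^+ 8 = 2 ^+ m.
  by rewrite /A -powR_mulrn ?powR_ge0 // -powRrM divfK ?pnatr_eq0 // powR_mulrn.
have lhsE : (6 * 5 ^+ m * A) ^+ 24 = (6 ^ 24 * 5 ^ (m * 24) * 2 ^ (m * 3))%:R.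
  by rewrite !exprMn (exprM A 8 3) A8 -!exprM !natrM !natrX.
rewrite -(@ler_pXn2r _ 24) ?nnegrE ?mulr_ge0 ?exprn_ge0 ?powR_ge0 //.
by rewrite lhsE -natrX ler_nat expn24_eighth_le.
Qed.

Lemma card_lower_bound (R : realType) (m N F : nat) :
  (8 <= m)%N -> (0 < F)%N -> (2 <= N)%N ->
  (4 ^ (m - m.-1 %/ 17) * 2 ^ m <= 3 * (N * (F * 5 ^ m)))%N ->
  1 + 2 `^ (m%:R / 8) / F%:R <= N%:R :> R.
Proof.
move=> m_ge8 F_gt0 N_ge2 count; set A : R := 2 `^ (m%:R / 8).
have F0 : 0 < F%:R :> R by rewrite ltr0n.
have AF : 2 * A <= N%:R * F%:R.
  rewrite -(ler_pM2l (_ : 0 < 3 * 5 ^+ m :> R)) ?mulr_gt0 ?exprn_gt0 //.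
  have -> : 3 * 5 ^+ m * (2 * A) = 6 * 5 ^+ m * A by ring.
  apply: le_trans (powR_eighth_le R m_ge8) _.
  have -> : 3 * 5 ^+ m * (N%:R * F%:R) = (3 * (N * (F * 5 ^ m)))%:R :> R.
    by rewrite !natrM natrX; ring.
  by rewrite ler_nat mulnC.
have AF' : 2 * (A / F%:R) <= N%:R by rewrite mulrA ler_pdivrMr.
have : 2 <= N%:R :> R by rewrite (ler_nat R 2).
lra.
Qed.

Theorem mainTheorem18 (R : realType) (K : nat) :
  (8 <= 'C(K, 2))%N ->
  exists Om : {set Omega K},
    zeroOmega K \in Om /\
    (forall w1 w2, w1 \in Om -> w2 \in Om -> w1 != w2 ->
       forall s : {perm 'I_K},
         ('C(K, 2)%:R / 17 : R) <= (dH (Tperm s w1) w2)%:R) /\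
    (1 + (2 : R) `^ ('C(K, 2)%:R / 8) / (K`!)%:R <= (#|Om|)%:R).
Proof.
move=> m_ge8.
have m_gt0 : (0 < #|{: pair2 K}|)%N by rewrite card_pair2; lia.
have [S [/separatedP sepS S0 S_ge2 count]] := exists_large_separated m_gt0.
rewrite card_pair2 in sepS count.
exists S; split => //; split.
  move=> w1 w2 S1 S2 ne12 s.
  by rewrite ler_pdivrMr ?ltr0n // -natrM ler_nat mulnC sepS.
exact: card_lower_bound m_ge8 (fact_gt0 K) S_ge2 count.
Qed.
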